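(* For each $d\ge 4$, there are at least $2^{d-3}$ finitely constrained subgroups of $\mathrm{Aut}(X^* )$ defined by patterns of size $d$ with Hausdorff dimension $1-\frac{2}{2^{d-1}}$ that are not topologically finitely generated.
   Context: Let $X=\{0,1\}$, $X^*$ the rooted binary tree of finite words, $G=\mathrm{Aut}(X^* )$, $G(d)$ the automorphism group of the finite tree of words of length $\le d$. Sections $g(wv)=g(w)g_w(v)$; $\pi_k$ restriction to words of length $\le k$. A subgroup $P\le G(d)$ is an essential pattern group if for every $p\in P$ and $i\in\{0,1\}$ there is $q\in P$ with $\pi_{d-1}(q)=p_i$; $G_P=\{g\in G:\pi_d(g_w)\in P\ \forall w\}$. A subgroup is finitely constrained if it equals some $G_P$, and defined by patterns of size $d$ if $d$ is the minimal such size. $\mathrm{Hdim}(K)=\liminf_n\log_2|K(n)|/\log_2|G(n)|$ with $K(n)=\pi_n(K)$. A closed subgroup is topologically finitely generated if it contains a finitely generated subgroup dense in the profinite topology. *)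

From Stdlib Require Import Reals List Arith.
Import ListNotations.

(** Words over X = {0,1} (false = 0, true = 1). *)
Definition word := list bool.

Definition tmap := word -> word.

Definition is_aut (g : tmap) : Prop :=
  (forall w, length (g w) = length w) /\
  (forall w v, exists u, g (w ++ v) = g w ++ u) /\
  (forall w w', g w = g w' -> w = w') /\
  (forall u, exists w, g w = u).

(** f is (a representative of) an automorphism of the finite tree of words
    of length <= d, i.e. an element of G(d); values on longer words are
    irrelevant. *)
Definition is_fin_aut (d : nat) (f : tmap) : Prop :=
  (forall w, length w <= d -> length (f w) = length w) /\
  (forall w v, length (w ++ v) <= d -> exists u, f (w ++ v) = f w ++ u) /\
  (forall w w', length w <= d -> length w' <= d -> f w = f w' -> w = w') /\
  (forall u, length u <= d -> exists w, length w <= d /\ f w = u).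

Definition agree (k : nat) (f f' : tmap) : Prop :=
  forall w, length w <= k -> f w = f' w.

(** Section g_w, defined by g(wv) = g(w) g_w(v). *)
Definition section (g : tmap) (w : word) : tmap :=
  fun v => skipn (length w) (g (w ++ v)).

(** P (a set of elements of G(d), given by representatives, closed under
    agreement on words of length <= d) is a subgroup of G(d). *)
Definition pattern_group (d : nat) (P : tmap -> Prop) : Prop :=
  (forall f f', agree d f f' -> P f -> P f') /\
  (forall f, P f -> is_fin_aut d f) /\
  P (fun w => w) /\
  (forall f h, P f -> P h -> P (fun w => f (h w))) /\
  (forall f, P f -> exists h, P h /\ agree d (fun w => h (f w)) (fun w => w)).

Definition essential (d : nat) (P : tmap -> Prop) : Prop :=
  forall p, P p -> forall i : bool,
    exists q, P q /\ agree (d - 1) q (section p [i]).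

Definition G_P (P : tmap -> Prop) (g : tmap) : Prop :=
  is_aut g /\ forall w, P (section g w).

Definition fc_of_size (K : tmap -> Prop) (d : nat) : Prop :=
  exists P, pattern_group d P /\ essential d P /\ (forall g, K g <-> G_P P g).

Definition defined_by_patterns_of_size (K : tmap -> Prop) (d : nat) : Prop :=
  fc_of_size K d /\ forall d', d' < d -> ~ fc_of_size K d'.

Fixpoint words_eq (n : nat) : list word :=
  match n with
  | 0 => [[]]
  | S m => flat_map (fun w => [false :: w; true :: w]) (words_eq m)
  end.
Definition words_upto (n : nat) : list word := flat_map words_eq (seq 0 (S n)).

(** pi_n(g), encoded as the list of images of all words of length <= n. *)
Definition restr (n : nat) (g : tmap) : list word := map g (words_upto n).

Definition card_level (K : tmap -> Prop) (n N : nat) : Prop :=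
  exists s : list (list word), length s = N /\ NoDup s /\
    forall x, In x s <-> exists g, K g /\ x = restr n g.

Open Scope R_scope.

Definition log2 (x : R) : R := ln x / ln 2.

Definition is_liminf (u : nat -> R) (a : R) : Prop :=
  (forall eps, 0 < eps -> exists N, forall n, (N <= n)%nat -> a - eps < u n) /\
  (forall eps, 0 < eps -> forall N, exists n, (N <= n)%nat /\ u n < a + eps).

Definition Hdim (K : tmap -> Prop) (a : R) : Prop :=
  exists NK NG : nat -> nat,
    (forall n, card_level K n (NK n)) /\
    (forall n, card_level is_aut n (NG n)) /\
    is_liminf (fun n => log2 (INR (NK n)) / log2 (INR (NG n))) a.

Close Scope R_scope.

Inductive gen (gs : list tmap) : tmap -> Prop :=
| gen_id : gen gs (fun w => w)
| gen_mul : forall s h, In s gs -> gen gs h -> gen gs (fun w => s (h w))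
| gen_inv : forall s t h, In s gs -> (forall w, t (s w) = w) ->
    (forall w, s (t w) = w) -> gen gs h -> gen gs (fun w => t (h w)).

(** K is topologically finitely generated: some finitely generated subgroup
    H = <gs> of K is dense in K for the profinite topology,
    i.e. pi_n(H) = pi_n(K) for all n. *)
Definition top_fin_gen (K : tmap -> Prop) : Prop :=
  exists gs : list tmap, (forall s, In s gs -> K s) /\
    forall n g, K g -> exists h, gen gs h /\ agree n h g.

(** An automorphism of the binary tree is determined by its portrait, the
    label in GF(2) at each vertex telling whether it swaps the two children.
    For [d >= 4] and [i < 2^(d-3)] let K_(d,i) consist of the automorphisms
    whose portrait satisfies, at every vertex [v] other than the root,
      (parity of the labels [d-2] levels below [v])
        = sum over [1 <= j <= d-3] of bit [j-1] of [i] times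
          (parity of the labels [j] levels below [v]).
    Level parities are additive under composition, because an automorphism
    permutes each level, so K_(d,i) is a group.  The relation at [w x] only
    involves labels at depth less than [d] below [w], so K_(d,i) is
    finitely constrained with patterns of size [d]; no smaller size works,
    since every automorphism agrees with an element of K_(d,i) on the first
    [d-1] levels while some automorphism violates the relation.  The
    relation at [[0]] reads off each bit of [i], so the groups are distinct.

    The relation at [v] can be solved for the label at [v 0^(d-2)], all other
    labels being free.  Counting the free vertices gives
    [log2 |K(n)| = 2^n + 1 - 2^(n-d+2)] for [n >= d - 1], whence the
    dimension [1 - 2/2^(d-1)].

    For every [m >= 1], the sum over level [m] of the same relation, shifted
    one level up and evaluated at left children, is a homomorphism
    K_(d,i) -> GF(2) depending only on level [m + d].  These homomorphisms
    are independent, so K_(d,i) maps onto GF(2)^M through a finite level for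
    every [M], which a dense subgroup generated by fewer than [M] elements
    cannot do. *)

From Stdlib Require Import Reals List Arith Lia Lra Bool Permutation FinFun Classical.
Import ListNotations.

Section Parity.
Context {A : Type}.

Definition parity (l : list A) (F : A -> bool) : bool :=
  fold_right (fun x acc => xorb (F x) acc) false l.

Lemma parity_app l1 l2 F : parity (l1 ++ l2) F = xorb (parity l1 F) (parity l2 F).
Proof. induction l1; simpl; auto. rewrite IHl1. now rewrite xorb_assoc. Qed.

Lemma parity_ext_in l F G : (forall x, In x l -> F x = G x) -> parity l F = parity l G.
Proof. induction l; simpl; intros H; auto. rewrite H by auto. now rewrite IHl by auto. Qed.

Lemma parity_xorb l F G :
  parity l (fun x => xorb (F x) (G x)) = xorb (parity l F) (parity l G).
Proof.
  induction l; simpl; auto. rewrite IHl.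
  destruct (F a), (G a), (parity l F), (parity l G); reflexivity.
Qed.

Lemma parity_false l F : (forall x, In x l -> F x = false) -> parity l F = false.
Proof. induction l; simpl; intros H; auto. rewrite H, IHl; auto. Qed.

Lemma parity_andb_l l c F : parity l (fun x => c && F x) = c && parity l F.
Proof. induction l; simpl. destruct c; auto. rewrite IHl. destruct c, (F a); auto. Qed.

Lemma parity_perm l l' F : Permutation l l' -> parity l F = parity l' F.
Proof.
  induction 1; simpl; auto; try congruence.
  destruct (F x), (F y), (parity l F); auto.
Qed.

Lemma parity_filter_split l p F :
  parity l F = xorb (parity (filter p l) F) (parity (filter (fun x => negb (p x)) l) F).
Proof.
  induction l; simpl; auto. rewrite IHl.
  destruct (p a); simpl; destruct (F a), (parity (filter p l) F),
    (parity (filter (fun x => negb (p x)) l) F); auto.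
Qed.

Lemma parity_indicator (dec : forall x y : A, {x = y} + {x <> y}) l x0 : NoDup l ->
  parity l (fun x => if dec x x0 then true else false) = if in_dec dec x0 l then true else false.
Proof.
  induction 1 as [|x l Hx _ IH]; simpl; auto. rewrite IH.
  destruct (dec x x0); destruct (in_dec dec x0 l); subst; tauto.
Qed.

End Parity.

Lemma parity_map {A B} (l : list B) (f : B -> A) F : parity (map f l) F = parity l (fun x => F (f x)).
Proof. induction l; simpl; auto. now rewrite IHl. Qed.

Lemma parity_flat_map {A B} (l : list B) (f : B -> list A) F :
  parity (flat_map f l) F = parity l (fun x => parity (f x) F).
Proof. induction l; simpl; auto. now rewrite parity_app, IHl. Qed.

Lemma parity_const_false {A} (l : list A) : parity l (fun _ => false) = false.
Proof. now apply parity_false. Qed.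

Definition word_eq_dec : forall u v : word, {u = v} + {u <> v} := list_eq_dec bool_dec.

Definition indicator (x0 x : word) : bool := if word_eq_dec x x0 then true else false.

Definition zeros (k : nat) : word := repeat false k.

Lemma length_zeros k : length (zeros k) = k.
Proof. apply repeat_length. Qed.

Lemma forallb_negb_zeros u : forallb negb u = true <-> u = zeros (length u).
Proof.
  induction u as [|[] u IH]; simpl. tauto. split; discriminate.
  rewrite IH. unfold zeros. simpl. split; intros H. now rewrite <- H. now injection H.
Qed.

Lemma app_inj_length {A} (a b c e : list A) :
  length a = length c -> a ++ b = c ++ e -> a = c /\ b = e.
Proof.
  revert c; induction a as [|x a IH]; intros [|y c] L E; simpl in *; try lia; auto.
  injection E; intros E2 ->. destruct (IH c ltac:(lia) E2). subst; auto.
Qed.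

Lemma indicator_app w0 u0 w u : length w = length w0 ->
  indicator (w0 ++ u0) (w ++ u) = indicator w0 w && indicator u0 u.
Proof.
  intros L. unfold indicator. destruct (word_eq_dec (w ++ u) (w0 ++ u0)) as [e|ne].
  - destruct (app_inj_length w u w0 u0 L e) as [-> ->].
    destruct (word_eq_dec w0 w0), (word_eq_dec u0 u0); simpl; auto; congruence.
  - destruct (word_eq_dec w w0), (word_eq_dec u u0); subst; auto.
Qed.

Lemma indicator_cons c x0 u : indicator (c :: x0) (c :: u) = indicator x0 u.
Proof.
  change (indicator ([c] ++ x0) ([c] ++ u) = indicator x0 u).
  rewrite indicator_app by reflexivity. unfold indicator at 1.
  now destruct (word_eq_dec [c] [c]).
Qed.

Lemma indicator_length_neq x0 x : length x <> length x0 -> indicator x0 x = false.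
Proof. intros H. unfold indicator. destruct (word_eq_dec x x0); subst; auto. congruence. Qed.

Lemma in_words_eq k w : In w (words_eq k) <-> length w = k.
Proof.
  revert w; induction k; intros w; simpl.
  - split. intros [<-|[]]; auto. destruct w; simpl; try discriminate; auto.
  - rewrite in_flat_map. split.
    + intros [u [Hu Hw]]. apply IHk in Hu. simpl in Hw. destruct Hw as [<-|[<-|[]]]; simpl; auto.
    + destruct w as [|c w]; simpl; try discriminate. intros H. exists w. split. apply IHk; lia.
      destruct c; simpl; auto.
Qed.

Lemma words_eq_NoDup k : NoDup (words_eq k).
Proof.
  induction k as [|k IH]; simpl. repeat constructor; auto.
  induction IH as [|x l Hx Hl IHl]; simpl. constructor.
  assert (Hin : forall c y, In (c :: y) (flat_map (fun w => [false :: w; true :: w]) l) -> In y l).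
  { intros c y Hy. apply in_flat_map in Hy. destruct Hy as [u [Hu Hy]].
    destruct Hy as [Hy|[Hy|[]]]; injection Hy; intros; subst; auto. }
  constructor. intros [Hc|Hc]. discriminate. apply Hin in Hc. contradiction.
  constructor. intros Hc. apply Hin in Hc. contradiction. auto.
Qed.

Lemma length_words_eq k : length (words_eq k) = 2 ^ k.
Proof.
  induction k; simpl; auto.
  assert (H : forall l : list word,
             length (flat_map (fun w => [false :: w; true :: w]) l) = 2 * length l).
  { induction l; simpl; auto. rewrite IHl. lia. }
  rewrite H, IHk. lia.
Qed.

Lemma parity_words_eq_indicator k x0 : parity (words_eq k) (indicator x0) = (length x0 =? k).
Proof.
  unfold indicator. rewrite (parity_indicator word_eq_dec) by apply words_eq_NoDup.
  destruct (in_dec word_eq_dec x0 (words_eq k)) as [H|H]; rewrite in_words_eq in H;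
    symmetry; [apply Nat.eqb_eq | apply Nat.eqb_neq]; auto.
Qed.

Definition nonzero_word (u : word) : bool := negb (forallb negb u).

Lemma parity_words_eq_zeros k F :
  parity (words_eq k) F = xorb (F (zeros k)) (parity (filter nonzero_word (words_eq k)) F).
Proof.
  rewrite (parity_filter_split _ nonzero_word). rewrite xorb_comm. f_equal.
  rewrite (parity_perm _ [zeros k]). simpl. apply xorb_false_r.
  apply NoDup_Permutation. apply NoDup_filter, words_eq_NoDup. repeat constructor; auto.
  intros x. rewrite filter_In, in_words_eq. unfold nonzero_word.
  rewrite negb_involutive, forallb_negb_zeros. simpl. split.
  - intros [H1 H2]. left. now rewrite H2, H1.
  - intros [<-|[]]. now rewrite length_zeros.
Qed.

(** * Portraits *)

(** [label g w] is the letter written by [g] after [g w] on the letter 0,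
    that is, whether [g] swaps the children of [w]. *)
Definition label (g : tmap) (w : word) : bool := nth (length w) (g (w ++ [false])) false.

Fixpoint of_portrait (a : word -> bool) (w : word) : word :=
  match w with
  | [] => []
  | x :: w' => xorb x (a []) :: of_portrait (fun u => a (x :: u)) w'
  end.

Fixpoint of_portrait_inv (a : word -> bool) (w : word) : word :=
  match w with
  | [] => []
  | y :: w' => xorb y (a []) :: of_portrait_inv (fun u => a (xorb y (a []) :: u)) w'
  end.

Lemma length_of_portrait a w : length (of_portrait a w) = length w.
Proof. revert a; induction w; simpl; auto. Qed.

Lemma of_portrait_app a w v :
  of_portrait a (w ++ v) = of_portrait a w ++ of_portrait (fun u => a (w ++ u)) v.
Proof. revert a; induction w; intros; simpl; auto. f_equal. now rewrite IHw. Qed.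

Lemma of_portrait_snoc a w x : of_portrait a (w ++ [x]) = of_portrait a w ++ [xorb x (a w)].
Proof. rewrite of_portrait_app. simpl. now rewrite app_nil_r. Qed.

Lemma of_portrait_ext_lt a b w :
  (forall x, length x < length w -> a x = b x) -> of_portrait a w = of_portrait b w.
Proof.
  revert a b; induction w; intros a' b' H; simpl; auto.
  rewrite (H []) by (simpl; lia). f_equal. apply IHw. intros x Hx. apply H. simpl; lia.
Qed.

Lemma label_of_portrait a w : label (of_portrait a) w = a w.
Proof.
  unfold label. rewrite of_portrait_snoc, <- (length_of_portrait a w) at 1.
  rewrite nth_middle. now destruct (a w).
Qed.

Lemma of_portrait_inv_r a u : of_portrait a (of_portrait_inv a u) = u.
Proof.
  revert a; induction u as [|y u IH]; intros b; simpl; auto.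
  rewrite IH. f_equal. now destruct y, (b []).
Qed.

Lemma of_portrait_inv_l a w : of_portrait_inv a (of_portrait a w) = w.
Proof.
  revert a; induction w as [|x w IH]; intros b; simpl; auto.
  replace (xorb (xorb x (b [])) (b [])) with x by (destruct x, (b []); auto).
  now rewrite IH.
Qed.

Lemma is_aut_of_portrait a : is_aut (of_portrait a).
Proof.
  split; [|split; [|split]].
  - intros; apply length_of_portrait.
  - intros w v. rewrite of_portrait_app. eauto.
  - intros w w' H. now rewrite <- (of_portrait_inv_l a w), <- (of_portrait_inv_l a w'), H.
  - intros u. exists (of_portrait_inv a u). apply of_portrait_inv_r.
Qed.

Lemma is_aut_ext f g : (forall w, f w = g w) -> is_aut f -> is_aut g.
Proof.
  intros E [H1 [H2 [H3 H4]]]. split; [|split; [|split]].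
  - intros w; rewrite <- E; auto.
  - intros w v. rewrite <- !E. auto.
  - intros w w'. rewrite <- !E. auto.
  - intros u. destruct (H4 u) as [w Hw]. exists w. now rewrite <- E.
Qed.

Lemma label_ext f g w : (forall x, f x = g x) -> label f w = label g w.
Proof. intros E. unfold label. now rewrite E. Qed.

Lemma label_id f w : (forall x, f x = x) -> label f w = false.
Proof. intros E. unfold label. rewrite E. now rewrite nth_middle. Qed.

Lemma aut_length g w : is_aut g -> length (g w) = length w.
Proof. intros [H _]; auto. Qed.

Lemma aut_nonnil g v : is_aut g -> v <> [] -> g v <> [].
Proof.
  intros Ha Hv E. apply Hv, length_zero_iff_nil. now rewrite <- (aut_length g v Ha), E.
Qed.

Lemma aut_snoc g w x : is_aut g -> g (w ++ [x]) = g w ++ [xorb x (label g w)].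
Proof.
  intros [H1 [H2 [H3 H4]]].
  assert (Hs : forall y, exists b, g (w ++ [y]) = g w ++ [b]).
  { intros y. destruct (H2 w [y]) as [u Hu]. pose proof (H1 (w ++ [y])) as L.
    rewrite Hu, !length_app, H1 in L. simpl in L.
    destruct u as [|b [|]]; simpl in L; try lia. eauto. }
  destruct (Hs false) as [b0 E0].
  assert (Hp : label g w = b0).
  { unfold label. rewrite E0, <- (H1 w) at 1. now rewrite nth_middle. }
  subst b0. destruct x; simpl; [|now rewrite E0].
  destruct (Hs true) as [b1 E1]. rewrite E1. destruct (bool_dec b1 (label g w)) as [->|ne].
  - rewrite <- E0 in E1. apply H3, app_inv_head in E1. discriminate.
  - destruct b1, (label g w); simpl; congruence.
Qed.

Lemma aut_eq_of_portrait g : is_aut g -> forall w, g w = of_portrait (label g) w.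
Proof.
  intros Ha w. induction w using rev_ind.
  - destruct Ha as [H1 _]. specialize (H1 []). destruct (g []); simpl in *; auto; discriminate.
  - now rewrite aut_snoc, of_portrait_snoc, IHw.
Qed.

Lemma section_of_portrait g w : is_aut g ->
  forall v, section g w v = of_portrait (fun u => label g (w ++ u)) v.
Proof.
  intros Ha v. unfold section. rewrite (aut_eq_of_portrait g Ha), of_portrait_app.
  rewrite <- (length_of_portrait (label g) w) at 1.
  now rewrite skipn_app, skipn_all, Nat.sub_diag.
Qed.

Lemma label_section g w u : is_aut g -> label (section g w) u = label g (w ++ u).
Proof.
  intros Ha. rewrite (label_ext _ _ _ (section_of_portrait g w Ha)).
  exact (label_of_portrait (fun u => label g (w ++ u)) u).
Qed.

Lemma is_aut_section g w : is_aut g -> is_aut (section g w).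
Proof.
  intros Ha. apply (is_aut_ext (of_portrait (fun u => label g (w ++ u)))).
  - intros; now rewrite section_of_portrait.
  - apply is_aut_of_portrait.
Qed.

Lemma aut_app h w u : is_aut h -> h (w ++ u) = h w ++ section h w u.
Proof.
  intros Ha. rewrite section_of_portrait, !(aut_eq_of_portrait h Ha) by auto.
  apply of_portrait_app.
Qed.

Lemma label_comp g h w : is_aut g -> is_aut h ->
  label (fun x => g (h x)) w = xorb (label h w) (label g (h w)).
Proof.
  intros Hg Hh. unfold label at 1. rewrite (aut_snoc h), (aut_snoc g) by auto.
  replace (length w) with (length (g (h w))) by (rewrite !aut_length; auto).
  rewrite nth_middle. now destruct (label h w).
Qed.

Lemma is_aut_comp g h : is_aut g -> is_aut h -> is_aut (fun x => g (h x)).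
Proof.
  intros [G1 [G2 [G3 G4]]] [H1 [H2 [H3 H4]]]. split; [|split; [|split]].
  - intros w. rewrite G1; auto.
  - intros w v. destruct (H2 w v) as [u ->]. apply G2.
  - intros w w' E. apply H3, G3, E.
  - intros u. destruct (G4 u) as [y <-]. destruct (H4 y) as [w <-]. eauto.
Qed.

Lemma is_aut_inverse g t : is_aut g ->
  (forall w, g (t w) = w) -> (forall w, t (g w) = w) -> is_aut t.
Proof.
  intros Hg E1 E2. pose proof Hg as [G1 [G2 [G3 G4]]]. split; [|split; [|split]].
  - intros w. rewrite <- (G1 (t w)). now rewrite E1.
  - intros w v. set (x := t (w ++ v)).
    assert (Hx : g x = w ++ v) by apply E1.
    assert (Lx : length x = length (w ++ v)) by (rewrite <- G1, Hx; auto).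
    destruct (G2 (firstn (length w) x) (skipn (length w) x)) as [u Hu].
    rewrite firstn_skipn, Hx in Hu.
    assert (L1 : length (g (firstn (length w) x)) = length w)
      by (rewrite G1, length_firstn; rewrite length_app in Lx; lia).
    destruct (app_inj_length w v _ u (eq_sym L1) Hu) as [Hw _].
    assert (Ht : t w = firstn (length w) x) by (rewrite Hw at 1; apply E2).
    exists (skipn (length w) x). rewrite Ht. symmetry. apply firstn_skipn.
  - intros w w' E. rewrite <- (E1 w), <- (E1 w'). now rewrite E.
  - intros u. exists (g u). auto.
Qed.

Definition aut_inv (g : tmap) : tmap := of_portrait_inv (label g).

Lemma aut_inv_l g : is_aut g -> forall w, aut_inv g (g w) = w.
Proof. intros Ha w. unfold aut_inv. rewrite (aut_eq_of_portrait g Ha w). apply of_portrait_inv_l. Qed.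

Lemma aut_inv_r g : is_aut g -> forall w, g (aut_inv g w) = w.
Proof. intros Ha w. unfold aut_inv. rewrite (aut_eq_of_portrait g Ha). apply of_portrait_inv_r. Qed.

Lemma of_portrait_perm_words_eq a k : Permutation (map (of_portrait a) (words_eq k)) (words_eq k).
Proof.
  apply NoDup_Permutation.
  - apply Injective_map_NoDup; [|apply words_eq_NoDup]. intros x y E.
    now rewrite <- (of_portrait_inv_l a x), <- (of_portrait_inv_l a y), E.
  - apply words_eq_NoDup.
  - intros x. rewrite in_map_iff, in_words_eq. split.
    + intros [y [<- Hy]]. apply in_words_eq in Hy. now rewrite length_of_portrait.
    + intros Hx. exists (of_portrait_inv a x). split. apply of_portrait_inv_r.
      apply in_words_eq. rewrite <- Hx, <- (length_of_portrait a (of_portrait_inv a x)).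
      now rewrite of_portrait_inv_r.
Qed.

(** A section of an automorphism permutes each level of the tree. *)
Lemma parity_section h w k F : is_aut h ->
  parity (words_eq k) (fun u => F (section h w u)) = parity (words_eq k) F.
Proof.
  intros Ha. rewrite (parity_ext_in _ _ (fun u => F (of_portrait (fun u => label h (w ++ u)) u))).
  - rewrite <- (parity_map _ (of_portrait (fun u => label h (w ++ u))) F).
    apply parity_perm, of_portrait_perm_words_eq.
  - intros; now rewrite section_of_portrait.
Qed.

Lemma parity_aut h k F : is_aut h ->
  parity (words_eq k) (fun u => F (h u)) = parity (words_eq k) F.
Proof. intros Ha. exact (parity_section h [] k F Ha). Qed.

Definition level_parity (a : word -> bool) (v : word) (k : nat) : bool :=
  parity (words_eq k) (fun u => a (v ++ u)).

Definition weighted_parity (d i : nat) (a : word -> bool) (v : word) : bool :=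
  parity (seq 1 (d - 3)) (fun j => Nat.testbit i (j - 1) && level_parity a v j).

Definition constraint (d i : nat) (a : word -> bool) : Prop :=
  forall v, v <> [] -> level_parity a v (d - 2) = weighted_parity d i a v.

Definition Kgroup (d i : nat) (g : tmap) : Prop := is_aut g /\ constraint d i (label g).

Lemma level_parity_ext a b v v' k :
  (forall u, length u = k -> a (v ++ u) = b (v' ++ u)) -> level_parity a v k = level_parity b v' k.
Proof. intros H. apply parity_ext_in. intros u Hu. apply H. now apply in_words_eq. Qed.

Lemma weighted_parity_ext d i a b v v' :
  (forall j, 1 <= j <= d - 3 -> level_parity a v j = level_parity b v' j) ->
  weighted_parity d i a v = weighted_parity d i b v'.
Proof. intros H. apply parity_ext_in. intros j Hj. apply in_seq in Hj. rewrite H by lia. auto. Qed.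

Lemma constraint_ext d i a b : (forall x, a x = b x) -> constraint d i a -> constraint d i b.
Proof.
  intros E H v Hv. rewrite <- (level_parity_ext a b v v), <- (weighted_parity_ext d i a b v v); auto.
  intros; apply level_parity_ext; auto.
Qed.

Lemma level_parity_zero a v k : (forall x, a x = false) -> level_parity a v k = false.
Proof. intros H. apply parity_false. auto. Qed.

Lemma weighted_parity_zero d i a v : (forall x, a x = false) -> weighted_parity d i a v = false.
Proof.
  intros H. apply parity_false. intros. rewrite level_parity_zero; auto. apply andb_false_r.
Qed.

Lemma level_parity_comp g h v k : is_aut g -> is_aut h ->
  level_parity (label (fun x => g (h x))) v k =
  xorb (level_parity (label h) v k) (level_parity (label g) (h v) k).
Proof.
  intros Hg Hh. unfold level_parity.
  rewrite (parity_ext_in _ _ (fun u => xorb (label h (v ++ u)) (label g (h v ++ section h v u)))).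
  - rewrite parity_xorb. f_equal. apply (parity_section h v k (fun u => label g (h v ++ u)) Hh).
  - intros u _. now rewrite label_comp, aut_app by auto.
Qed.

Lemma weighted_parity_comp d i g h v : is_aut g -> is_aut h ->
  weighted_parity d i (label (fun x => g (h x))) v =
  xorb (weighted_parity d i (label h) v) (weighted_parity d i (label g) (h v)).
Proof.
  intros Hg Hh. unfold weighted_parity. rewrite <- parity_xorb. apply parity_ext_in. intros j _.
  rewrite level_parity_comp by auto. destruct (Nat.testbit i (j-1)); auto.
Qed.

Lemma Kgroup_id d i : Kgroup d i (fun w => w).
Proof.
  split.
  - apply (is_aut_ext (of_portrait (fun _ => false))); [|apply is_aut_of_portrait].
    induction w; simpl; auto. now rewrite xorb_false_r, IHw.
  - intros v _. rewrite level_parity_zero, weighted_parity_zero; auto; intros; now apply label_id.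
Qed.

Lemma Kgroup_comp d i g h : Kgroup d i g -> Kgroup d i h -> Kgroup d i (fun x => g (h x)).
Proof.
  intros [Hg Cg] [Hh Ch]. split. now apply is_aut_comp.
  intros v Hv. rewrite level_parity_comp, weighted_parity_comp, Ch, Cg by auto using aut_nonnil.
  reflexivity.
Qed.

Lemma Kgroup_inv d i s t : Kgroup d i s ->
  (forall w, s (t w) = w) -> (forall w, t (s w) = w) -> Kgroup d i t.
Proof.
  intros [Hs Cs] E1 E2. assert (Ht : is_aut t) by (eapply is_aut_inverse; eauto).
  assert (Z : forall v k, level_parity (label t) v k = level_parity (label s) (t v) k).
  { intros v k. pose proof (level_parity_comp s t v k Hs Ht) as C.
    rewrite level_parity_zero in C by (intros; now apply label_id).
    destruct (level_parity (label t) v k), (level_parity (label s) (t v) k); simpl in *; congruence. }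
  split; auto. intros v Hv. rewrite Z, Cs by auto using aut_nonnil.
  apply weighted_parity_ext. intros; symmetry; apply Z.
Qed.

Lemma Kgroup_section d i g w : Kgroup d i g -> Kgroup d i (section g w).
Proof.
  intros [Hg Cg]. split. now apply is_aut_section.
  intros v Hv.
  assert (Z : forall k, level_parity (label (section g w)) v k = level_parity (label g) (w ++ v) k).
  { intros k. apply level_parity_ext. intros u _. now rewrite label_section, app_assoc. }
  rewrite Z, Cg.
  - apply weighted_parity_ext. intros; symmetry; apply Z.
  - destruct w; simpl; auto. discriminate.
Qed.

(** * Completing a portrait *)

Definition ends_with_zeros (k : nat) (x : word) : bool := forallb negb (skipn (length x - k) x).

(** The vertices [v 0^(d-2)] with [v] nonempty, whose labels are forced by the constraint at [v]. *)
Definition designated (d : nat) (x : word) : bool :=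
  (d - 1 <=? length x) && ends_with_zeros (d - 2) x.

(** Keeps [f] off the designated vertices and solves the constraint at [v]
    for the label at [v 0^(d-2)]; the recursion is on the length of the vertex, given as fuel. *)
Fixpoint complete_fuel (d i : nat) (f : word -> bool) (n : nat) (x : word) : bool :=
  match n with
  | 0 => f x
  | S n' =>
      if designated d x then
        let v := firstn (length x - (d - 2)) x in
        xorb (parity (seq 1 (d - 3)) (fun j => Nat.testbit i (j - 1) &&
                parity (words_eq j) (fun u => complete_fuel d i f n' (v ++ u))))
             (parity (filter nonzero_word (words_eq (d - 2))) (fun u => f (v ++ u)))
      else f x
  end.

Definition complete (d i : nat) (f : word -> bool) (x : word) : bool :=
  complete_fuel d i f (length x) x.

Lemma firstn_app_length (v u : word) k : length u = k -> firstn (length (v ++ u) - k) (v ++ u) = v.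
Proof.
  intros Hu. rewrite length_app. replace (length v + length u - k) with (length v) by lia.
  rewrite firstn_app, firstn_all, Nat.sub_diag. apply app_nil_r.
Qed.

Section Completion.
Variables d i : nat.
Hypothesis Hd : 4 <= d.

Lemma designated_short x : length x < d - 1 -> designated d x = false.
Proof.
  intros. unfold designated. replace (d - 1 <=? length x) with false; auto.
  symmetry; apply Nat.leb_gt; lia.
Qed.

Lemma designated_long x : designated d x = true -> d - 1 <= length x.
Proof. unfold designated. intros H. apply andb_prop in H. apply Nat.leb_le. tauto. Qed.

Lemma designated_app v u : length u = d - 2 -> v <> [] -> designated d (v ++ u) = forallb negb u.
Proof.
  intros Hu Hv. unfold designated, ends_with_zeros. rewrite length_app.
  assert (1 <= length v) by (destruct v; [congruence|simpl; lia]).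
  replace (d - 1 <=? length v + length u) with true by (symmetry; apply Nat.leb_le; lia).
  replace (length v + length u - (d - 2)) with (length v) by lia.
  now rewrite skipn_app, skipn_all, Nat.sub_diag.
Qed.

Lemma designated_split x : designated d x = true ->
  x = firstn (length x - (d - 2)) x ++ zeros (d - 2) /\ firstn (length x - (d - 2)) x <> [].
Proof.
  intros H. unfold designated, ends_with_zeros in H. apply andb_prop in H. destruct H as [H1 H2].
  apply Nat.leb_le in H1. apply forallb_negb_zeros in H2. rewrite length_skipn in H2.
  replace (length x - (length x - (d - 2))) with (d - 2) in H2 by lia. split.
  - rewrite <- H2. symmetry. apply firstn_skipn.
  - intros E. apply (f_equal (@length bool)) in E. rewrite length_firstn in E. simpl in E. lia.
Qed.

Lemma complete_fuel_enough f : forall N x n1 n2, length x <= N -> length x <= n1 -> length x <= n2 ->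
  complete_fuel d i f n1 x = complete_fuel d i f n2 x.
Proof.
  induction N; intros x n1 n2 HN H1 H2.
  - assert (designated d x = false) by (apply designated_short; lia).
    destruct n1, n2; simpl; rewrite ?H; auto.
  - destruct (designated d x) eqn:Ed.
    + pose proof (designated_long x Ed).
      destruct n1 as [|n1]; [lia|]. destruct n2 as [|n2]; [lia|]. simpl. rewrite Ed. f_equal.
      apply parity_ext_in. intros j Hj. apply in_seq in Hj. f_equal. apply parity_ext_in. intros u Hu.
      apply in_words_eq in Hu. apply IHN; rewrite length_app, length_firstn; lia.
    + destruct n1, n2; simpl; rewrite ?Ed; auto.
Qed.

Lemma complete_eq f x : complete d i f x =
  if designated d x then
    xorb (weighted_parity d i (complete d i f) (firstn (length x - (d - 2)) x))
         (parity (filter nonzero_word (words_eq (d - 2)))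
            (fun u => f (firstn (length x - (d - 2)) x ++ u)))
  else f x.
Proof.
  unfold complete at 1. destruct (designated d x) eqn:Ed.
  - pose proof (designated_long x Ed).
    destruct (length x) eqn:L; [lia|]. simpl. rewrite Ed, L. f_equal.
    apply parity_ext_in. intros j Hj. apply in_seq in Hj. f_equal. apply parity_ext_in. intros u Hu.
    apply in_words_eq in Hu. unfold complete.
    apply (complete_fuel_enough f (S n)); rewrite length_app, length_firstn;
      destruct (d - 2) eqn:E2; lia.
  - destruct (length x); simpl; rewrite ?Ed; auto.
Qed.

Lemma complete_free f x : designated d x = false -> complete d i f x = f x.
Proof. intros H. now rewrite complete_eq, H. Qed.

Lemma constraint_complete f : constraint d i (complete d i f).
Proof.
  intros v Hv. assert (Lz : length (zeros (d - 2)) = d - 2) by apply length_zeros.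
  unfold level_parity at 1. rewrite parity_words_eq_zeros, complete_eq, designated_app by auto.
  replace (forallb negb (zeros (d - 2))) with true
    by (symmetry; apply forallb_negb_zeros; now rewrite Lz).
  rewrite firstn_app_length by auto.
  rewrite (parity_ext_in _ (fun u => complete d i f (v ++ u)) (fun u => f (v ++ u))).
  - now rewrite xorb_assoc, xorb_nilpotent, xorb_false_r.
  - intros u Hu. apply filter_In in Hu. destruct Hu as [Hu1 Hu2]. apply in_words_eq in Hu1.
    apply complete_free. rewrite designated_app by auto. unfold nonzero_word in Hu2.
    now destruct (forallb negb u).
Qed.

Lemma complete_unique f a : constraint d i a -> forall n,
  (forall y, length y < n -> designated d y = false -> f y = a y) ->
  forall x, length x < n -> complete d i f x = a x.
Proof.
  intros Ca n Hf x.
  induction x as [x IH] using (well_founded_induction (Wf_nat.well_founded_ltof _ (@length bool))).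
  intros Hx. destruct (designated d x) eqn:Ed; [|rewrite complete_free by auto; now apply Hf].
  pose proof (designated_long x Ed).
  rewrite complete_eq, Ed. destruct (designated_split x Ed) as [Ex Hv].
  set (v := firstn (length x - (d - 2)) x) in *.
  assert (Lv : length v + (d - 2) = length x) by (unfold v; rewrite length_firstn; lia).
  pose proof (Ca v Hv) as C. unfold level_parity in C.
  rewrite parity_words_eq_zeros, <- Ex in C.
  rewrite (weighted_parity_ext d i (complete d i f) a v v).
  - rewrite <- C, (parity_ext_in _ (fun u => f (v ++ u)) (fun u => a (v ++ u))).
    + now rewrite xorb_assoc, xorb_nilpotent, xorb_false_r.
    + intros u Hu. apply filter_In in Hu. destruct Hu as [Hu1 Hu2]. apply in_words_eq in Hu1.
      apply Hf. rewrite length_app; lia.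
      rewrite designated_app by auto. unfold nonzero_word in Hu2. now destruct (forallb negb u).
  - intros j Hj. apply level_parity_ext. intros u Hu.
    apply IH; unfold Wf_nat.ltof; rewrite length_app; lia.
Qed.

Lemma Kgroup_of_complete f : Kgroup d i (of_portrait (complete d i f)).
Proof.
  split. apply is_aut_of_portrait.
  apply (constraint_ext d i (complete d i f)). intros; symmetry; apply label_of_portrait.
  apply constraint_complete.
Qed.

End Completion.

(** * Finite constraints of size exactly [d] *)

Definition K_patterns (d i : nat) (f : tmap) : Prop := exists k, Kgroup d i k /\ agree d f k.

Lemma label_agree n h g x : agree n h g -> length x < n -> label h x = label g x.
Proof. intros H Hx. unfold label. rewrite H; auto. rewrite length_app; simpl; lia. Qed.

Lemma is_fin_aut_agree d f k : is_aut k -> agree d f k -> is_fin_aut d f.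
Proof.
  intros [K1 [K2 [K3 K4]]] H. split; [|split; [|split]].
  - intros w Hw. rewrite H; auto.
  - intros w v Hwv. rewrite !H; auto. rewrite length_app in Hwv; lia.
  - intros w w' Hw Hw'. rewrite !H; auto.
  - intros u Hu. destruct (K4 u) as [w Hw]. exists w.
    assert (length w <= d) by (rewrite <- K1, Hw; auto).
    split; auto. rewrite H; auto.
Qed.

Lemma pattern_group_K_patterns d i : pattern_group d (K_patterns d i).
Proof.
  split; [|split; [|split; [|split]]].
  - intros f f' Ha [k [Kk Hk]]. exists k. split; auto. intros w Hw. rewrite <- Ha; auto.
  - intros f [k [[Ha _] Hk]]. eapply is_fin_aut_agree; eauto.
  - exists (fun w => w). split. apply Kgroup_id. intros w _; auto.
  - intros f h [kf [Kf Hf]] [kh [Kh Hh]]. exists (fun w => kf (kh w)). split. now apply Kgroup_comp.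
    intros w Hw. rewrite Hh, Hf; auto. rewrite aut_length; auto. apply Kh.
  - intros f [k [Kk Hk]]. exists (aut_inv k). split.
    + exists (aut_inv k). split; [|intros w _; auto]. apply (Kgroup_inv d i k); auto.
      apply aut_inv_r, Kk. apply aut_inv_l, Kk.
    + intros w Hw. rewrite Hk; auto. apply aut_inv_l, Kk.
Qed.

Lemma essential_K_patterns d i : 0 < d -> essential d (K_patterns d i).
Proof.
  intros Hd p [k [Kk Hk]] x. exists (section k [x]). split.
  - exists (section k [x]). split. now apply Kgroup_section. intros w _; auto.
  - intros w Hw. unfold section. simpl. rewrite Hk; auto. simpl; lia.
Qed.

Lemma Kgroup_iff_G_P d i g : 4 <= d -> Kgroup d i g <-> G_P (K_patterns d i) g.
Proof.
  intros Hd. split.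
  - intros Kg. split. apply Kg. intros w. exists (section g w). split. now apply Kgroup_section.
    intros x _; auto.
  - intros [Ha HP]. split; auto. intros v Hv. destruct (exists_last Hv) as [w [x ->]].
    destruct (HP w) as [k [[Hk Ck] Ag]].
    assert (Z : forall j, j <= d - 2 ->
               level_parity (label g) (w ++ [x]) j = level_parity (label k) [x] j).
    { intros j Hj. apply level_parity_ext. intros u Hu.
      rewrite <- (label_agree d (section g w) k), label_section, app_assoc; auto.
      rewrite length_app; simpl; lia. }
    rewrite Z, Ck by (lia || discriminate). apply weighted_parity_ext. intros; symmetry; apply Z; lia.
Qed.

Lemma fc_of_size_Kgroup d i : 4 <= d -> fc_of_size (Kgroup d i) d.
Proof.
  intros Hd. exists (K_patterns d i).
  split; [apply pattern_group_K_patterns|split].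
  - apply essential_K_patterns; lia.
  - intros g. now apply Kgroup_iff_G_P.
Qed.

Lemma level_parity_indicator k x0 :
  level_parity (indicator (false :: x0)) [false] k = (length x0 =? k).
Proof.
  unfold level_parity. simpl. rewrite (parity_ext_in _ _ (indicator x0)).
  apply parity_words_eq_indicator. intros; apply indicator_cons.
Qed.

(** Below [[0]] only level [d - 2] carries a nontrivial label. *)
Lemma not_Kgroup_single_swap d i : 4 <= d -> ~ Kgroup d i (of_portrait (indicator (zeros (d - 1)))).
Proof.
  intros Hd [_ C]. specialize (C [false] ltac:(discriminate)).
  assert (E : forall x, label (of_portrait (indicator (zeros (d - 1)))) x
                        = indicator (false :: zeros (d - 2)) x).
  { intros x. rewrite label_of_portrait. now replace (d - 1) with (S (d - 2)) by lia. }
  rewrite (level_parity_ext _ (indicator (false :: zeros (d - 2))) _ [false]) in C by auto.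
  rewrite (weighted_parity_ext d i _ (indicator (false :: zeros (d - 2))) _ [false]) in C
    by (intros; apply level_parity_ext; auto).
  rewrite level_parity_indicator, length_zeros, Nat.eqb_refl in C.
  unfold weighted_parity in C. rewrite parity_false in C; [discriminate|].
  intros j Hj. apply in_seq in Hj. rewrite level_parity_indicator, length_zeros.
  replace (d - 2 =? j) with false by (symmetry; apply Nat.eqb_neq; lia). apply andb_false_r.
Qed.

Lemma pattern_group_contains_auts d i d' P : 4 <= d -> d' < d -> pattern_group d' P ->
  (forall g, Kgroup d i g <-> G_P P g) -> forall s, is_aut s -> P s.
Proof.
  intros Hd Hd' [P_agree _] Hiff s Hs.
  set (k := of_portrait (complete d i (label s))).
  assert (Kk : Kgroup d i k) by now apply Kgroup_of_complete.
  apply Hiff in Kk. destruct Kk as [_ HP]. specialize (HP []).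
  apply (P_agree _ s) in HP; auto. intros w Hw. unfold section. simpl. unfold k.
  rewrite (aut_eq_of_portrait s Hs w). apply of_portrait_ext_lt. intros x Hx.
  apply complete_free, designated_short; lia.
Qed.

Lemma not_fc_of_smaller_size d i : 4 <= d -> forall d', d' < d -> ~ fc_of_size (Kgroup d i) d'.
Proof.
  intros Hd d' Hd' [P [PG [_ Hiff]]]. apply (not_Kgroup_single_swap d i Hd), Hiff.
  split. apply is_aut_of_portrait.
  intros w. apply (pattern_group_contains_auts d i d' P); auto.
  apply is_aut_section, is_aut_of_portrait.
Qed.

(** Below [[0]], the completed portrait has a single nontrivial label above
    level [d - 2], at depth [p + 1]. *)
Lemma weighted_parity_bit d i i' p : 4 <= d -> p < d - 3 ->
  weighted_parity d i' (label (of_portrait (complete d i (indicator (zeros (p + 2)))))) [false]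
  = Nat.testbit i' p.
Proof.
  intros Hd Hp. unfold weighted_parity.
  rewrite (parity_ext_in _ _
    (fun j => Nat.testbit i' p && (if Nat.eq_dec j (p + 1) then true else false))).
  - rewrite parity_andb_l, (parity_indicator Nat.eq_dec) by apply seq_NoDup.
    destruct (in_dec Nat.eq_dec (p + 1) (seq 1 (d - 3))) as [H|H].
    + apply andb_true_r.
    + exfalso; apply H, in_seq; lia.
  - intros j Hj. apply in_seq in Hj.
    rewrite (level_parity_ext _ (indicator (false :: zeros (p + 1))) _ [false]).
    + rewrite level_parity_indicator, length_zeros. destruct (Nat.eq_dec j (p + 1)) as [->|].
      * replace (p + 1 - 1) with p by lia. now rewrite Nat.eqb_refl, andb_true_r.
      * replace (p + 1 =? j) with false by (symmetry; apply Nat.eqb_neq; lia).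
        now rewrite !andb_false_r.
    + intros u Hu.
      rewrite label_of_portrait, complete_free by (auto; apply designated_short; simpl; lia).
      now replace (p + 2) with (S (p + 1)) by lia.
Qed.

Lemma testbit_neq_lt i j n : i <> j -> i < 2 ^ n -> j < 2 ^ n ->
  exists p, p < n /\ Nat.testbit i p <> Nat.testbit j p.
Proof.
  intros Hij Hi Hj. apply NNPP. intros H. apply Hij, Nat.bits_inj. intros p.
  destruct (Nat.lt_ge_cases p n).
  - apply NNPP. intros H2. apply H. eauto.
  - assert (Z : forall a, a < 2 ^ n -> Nat.testbit a p = false).
    { intros a Ha. destruct (Nat.eq_dec a 0) as [->|]. apply Nat.bits_0. apply Nat.bits_above_log2.
      apply Nat.log2_lt_pow2 in Ha; lia. }
    now rewrite !Z.
Qed.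

Lemma Kgroup_neq d i j : 4 <= d -> i < j < 2 ^ (d - 3) ->
  ~ (forall g, Kgroup d i g <-> Kgroup d j g).
Proof.
  intros Hd [Hij Hj] H. destruct (testbit_neq_lt i j (d - 3)) as [p [Hp Hb]]; try lia.
  pose proof (Kgroup_of_complete d i Hd (indicator (zeros (p + 2)))) as [_ Ci].
  pose proof (proj1 (H _) (Kgroup_of_complete d i Hd (indicator (zeros (p + 2))))) as [_ Cj].
  specialize (Ci [false] ltac:(discriminate)). specialize (Cj [false] ltac:(discriminate)).
  rewrite weighted_parity_bit in Ci, Cj by auto. congruence.
Qed.

Definition portrait_of_values (Fr : list word) (b : list bool) (x : word) : bool :=
  match find (fun p => if word_eq_dec (fst p) x then true else false) (combine Fr b) with
  | Some p => snd p
  | None => false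
  end.

Lemma portrait_of_values_map Fr a x : In x Fr -> portrait_of_values Fr (map a Fr) x = a x.
Proof.
  unfold portrait_of_values. induction Fr as [|y Fr IH]; simpl; intros H; [contradiction|].
  destruct (word_eq_dec y x) as [->|]; auto. destruct H; [congruence|]. auto.
Qed.

Lemma map_portrait_of_values Fr b : NoDup Fr -> length b = length Fr ->
  map (portrait_of_values Fr b) Fr = b.
Proof.
  revert b; induction Fr as [|y Fr IH]; intros [|c b] ND L; simpl in *; try lia; auto.
  inversion ND; subst. unfold portrait_of_values at 1. simpl.
  destruct (word_eq_dec y y); [|congruence]. simpl. f_equal.
  rewrite <- (IH b) at 2; auto. apply map_ext_in. intros x Hx. unfold portrait_of_values. simpl.
  destruct (word_eq_dec y x); auto. subst; contradiction.
Qed.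

Lemma in_words_upto n w : In w (words_upto n) <-> length w <= n.
Proof.
  unfold words_upto. rewrite in_flat_map. split.
  - intros [k [Hk Hw]]. apply in_seq in Hk. apply in_words_eq in Hw. lia.
  - intros H. exists (length w). split. apply in_seq; lia. now apply in_words_eq.
Qed.

(** [complete f] is the portrait in [C] taking the values of [f] on the free vertices [Fr]. *)
Lemma card_level_of_free_vertices (C : (word -> bool) -> Prop)
    (complete : (word -> bool) -> word -> bool) (Fr : list word) n :
  (forall a b, (forall x, a x = b x) -> C a -> C b) ->
  NoDup Fr -> (forall x, In x Fr -> length x < n) ->
  (forall f, C (complete f)) -> (forall f x, In x Fr -> complete f x = f x) ->
  (forall a f, C a -> (forall x, In x Fr -> f x = a x) ->
     forall x, length x < n -> complete f x = a x) ->
  card_level (fun g => is_aut g /\ C (label g)) n (2 ^ length Fr).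
Proof.
  intros C_ext ND HFr C_complete complete_free complete_unique.
  set (elt b := of_portrait (complete (portrait_of_values Fr b))).
  exists (map (fun b => restr n (elt b)) (words_eq (length Fr))). split; [|split].
  - now rewrite length_map, length_words_eq.
  - apply Injective_map_NoDup_in; [|apply words_eq_NoDup]. intros b b' Hb Hb' E.
    apply in_words_eq in Hb, Hb'.
    rewrite <- (map_portrait_of_values Fr b), <- (map_portrait_of_values Fr b') by (auto; congruence).
    apply map_ext_in. intros x Hx.
    rewrite <- (complete_free (portrait_of_values Fr b) x Hx),
      <- (complete_free (portrait_of_values Fr b') x Hx),
      <- (label_of_portrait (complete (portrait_of_values Fr b))),
      <- (label_of_portrait (complete (portrait_of_values Fr b'))).
    unfold label. f_equal. unfold restr in E. apply (proj1 map_ext_in_iff E).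
    apply in_words_upto. rewrite length_app. specialize (HFr x Hx). simpl; lia.
  - intros x. rewrite in_map_iff. split.
    + intros [b [<- Hb]]. exists (elt b). split; [|reflexivity]. split. apply is_aut_of_portrait.
      apply (C_ext (complete (portrait_of_values Fr b))); [|apply C_complete].
      intros; symmetry; apply label_of_portrait.
    + intros [g [[Hg Cg] ->]]. exists (map (label g) Fr). split.
      * unfold restr. apply map_ext_in. intros w Hw. apply in_words_upto in Hw.
        rewrite (aut_eq_of_portrait g Hg w). apply of_portrait_ext_lt. intros y Hy.
        apply (complete_unique (label g)); [exact Cg| |lia].
        intros; now apply portrait_of_values_map.
      * apply in_words_eq. now rewrite length_map.
Qed.

Definition inner_vertices (n : nat) : list word := flat_map words_eq (seq 0 n).

Lemma in_inner_vertices n x : In x (inner_vertices n) <-> length x < n.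
Proof.
  unfold inner_vertices. rewrite in_flat_map. split.
  - intros [k [Hk Hw]]. apply in_seq in Hk. apply in_words_eq in Hw. lia.
  - intros H. exists (length x). split. apply in_seq; lia. now apply in_words_eq.
Qed.

Lemma inner_vertices_S n : inner_vertices (S n) = inner_vertices n ++ words_eq n.
Proof. unfold inner_vertices. rewrite seq_S, flat_map_app. simpl. now rewrite app_nil_r. Qed.

Lemma inner_vertices_NoDup n : NoDup (inner_vertices n).
Proof.
  induction n. constructor. rewrite inner_vertices_S. apply NoDup_app; auto. apply words_eq_NoDup.
  intros a Ha Hb. apply in_inner_vertices in Ha. apply in_words_eq in Hb. lia.
Qed.

Lemma length_inner_vertices n : length (inner_vertices n) + 1 = 2 ^ n.
Proof.
  induction n. reflexivity.
  rewrite inner_vertices_S, length_app, length_words_eq, Nat.pow_succ_r'. lia.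
Qed.

Lemma card_level_aut n : card_level is_aut n (2 ^ length (inner_vertices n)).
Proof.
  destruct (card_level_of_free_vertices (fun _ => True) (fun f => f) (inner_vertices n) n)
    as [s [H1 [H2 H3]]]; auto.
  - apply inner_vertices_NoDup.
  - intros; now apply in_inner_vertices.
  - intros a f _ Hf x Hx. apply Hf, in_inner_vertices; auto.
  - exists s. do 2 (split; auto). intros x. rewrite H3.
    split; intros [g [Hg E]]; exists g; split; try tauto; auto.
Qed.

Definition free (d : nat) (x : word) : bool := negb (designated d x).

Lemma card_level_Kgroup d i n : 4 <= d ->
  card_level (Kgroup d i) n (2 ^ length (filter (free d) (inner_vertices n))).
Proof.
  intros Hd. apply (card_level_of_free_vertices (constraint d i) (complete d i)).
  - intros a b E Ca. eapply constraint_ext; eauto.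
  - apply NoDup_filter, inner_vertices_NoDup.
  - intros x Hx. apply filter_In in Hx. apply in_inner_vertices; tauto.
  - intros; now apply constraint_complete.
  - intros f x Hx. apply filter_In in Hx. unfold free in Hx. apply complete_free; auto.
    now destruct (designated d x); simpl in *; [destruct Hx|].
  - intros a f Ca Hf. apply complete_unique; auto. intros y Hy Hdy. apply Hf, filter_In.
    split. now apply in_inner_vertices. unfold free. now rewrite Hdy.
Qed.

Lemma ends_with_zeros_iff k x : k <= length x ->
  ends_with_zeros k x = true <-> exists v, x = v ++ zeros k.
Proof.
  intros Hk. unfold ends_with_zeros. rewrite forallb_negb_zeros, length_skipn.
  replace (length x - (length x - k)) with k by lia. split.
  - intros E. exists (firstn (length x - k) x). now rewrite <- E, firstn_skipn.
  - intros [v ->]. rewrite length_app, length_zeros, Nat.add_sub, skipn_app, skipn_all, Nat.sub_diag.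
    reflexivity.
Qed.

Lemma count_ends_with_zeros L k : k <= L ->
  length (filter (ends_with_zeros k) (words_eq L)) = 2 ^ (L - k).
Proof.
  intros Hk. rewrite <- (length_words_eq (L - k)),
    <- (length_map (fun v : word => v ++ zeros k) (words_eq (L - k))).
  apply Permutation_length, NoDup_Permutation.
  - apply NoDup_filter, words_eq_NoDup.
  - apply Injective_map_NoDup; [|apply words_eq_NoDup]. intros u v. apply app_inv_tail.
  - intros x. rewrite filter_In, in_words_eq, in_map_iff. split.
    + intros [Hx Hz]. apply ends_with_zeros_iff in Hz as [v ->]; [|lia].
      exists v. split; auto. apply in_words_eq.
      rewrite length_app, length_zeros in Hx. lia.
    + intros [v [<- Hv]]. apply in_words_eq in Hv.
      rewrite length_app, length_zeros. split; [lia|].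
      apply ends_with_zeros_iff; [rewrite length_app, length_zeros; lia | eauto].
Qed.

Lemma count_free_short d L : 4 <= d -> L < d - 1 ->
  length (filter (free d) (words_eq L)) = 2 ^ L.
Proof.
  intros Hd HL. rewrite <- (length_words_eq L). f_equal. apply forallb_filter_id, forallb_forall.
  intros x Hx. apply in_words_eq in Hx. unfold free. rewrite designated_short; auto. lia.
Qed.

Lemma count_free_long d L : 4 <= d -> d - 1 <= L ->
  length (filter (free d) (words_eq L)) + 2 ^ (L - (d - 2)) = 2 ^ L.
Proof.
  intros Hd HL. rewrite <- (length_words_eq L), <- (filter_length (designated d) (words_eq L)).
  unfold free. rewrite <- (count_ends_with_zeros L (d - 2)) by lia.
  replace (filter (designated d) (words_eq L)) with (filter (ends_with_zeros (d - 2)) (words_eq L));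
    [lia|].
  apply filter_ext_in. intros x Hx. apply in_words_eq in Hx. unfold designated.
  replace (d - 1 <=? length x) with true; auto. symmetry. apply Nat.leb_le. lia.
Qed.

(** The designated vertices of depth less than [n] number [2^(n-d+2) - 2]. *)
Lemma count_free_inner d n : 4 <= d -> d - 1 <= n ->
  length (filter (free d) (inner_vertices n)) + 2 ^ (n - (d - 2)) = 2 ^ n + 1.
Proof.
  intros Hd Hn. induction n as [|n IH]; [lia|].
  rewrite inner_vertices_S, filter_app, length_app.
  destruct (Nat.eq_dec n (d - 2)) as [->|].
  - assert (Hall : forall m, m <= d - 2 -> length (filter (free d) (inner_vertices m)) + 1 = 2 ^ m).
    { induction m; intros Hm. reflexivity.
      rewrite inner_vertices_S, filter_app, length_app, count_free_short, Nat.pow_succ_r' by lia.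
      specialize (IHm ltac:(lia)). lia. }
    rewrite count_free_short by lia. specialize (Hall (d - 2) (le_n _)).
    replace (S (d - 2) - (d - 2)) with 1 by lia.
    rewrite (Nat.pow_succ_r' 2 (d - 2)). simpl (2 ^ 1). lia.
  - specialize (IH ltac:(lia)). pose proof (count_free_long d n Hd ltac:(lia)).
    replace (S n - (d - 2)) with (S (n - (d - 2))) by lia.
    rewrite !Nat.pow_succ_r'. lia.
Qed.

(** * Hausdorff dimension *)

Open Scope R_scope.

Lemma is_liminf_from_above (u : nat -> R) a N :
  (forall n, (N <= n)%nat -> a < u n) ->
  (forall eps, 0 < eps -> exists M, forall n, (M <= n)%nat -> u n < a + eps) ->
  is_liminf u a.
Proof.
  intros Hlow Hup. split.
  - intros eps Heps. exists N. intros n Hn. specialize (Hlow n Hn). lra.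
  - intros eps Heps N'. destruct (Hup eps Heps) as [M HM].
    exists (Nat.max N' M). split; [lia|]. apply HM. lia.
Qed.

Lemma log2_pow k : log2 (INR (2 ^ k)) = INR k.
Proof.
  unfold log2. rewrite pow_INR. replace (INR 2) with 2 by (simpl; lra). rewrite ln_pow by lra.
  assert (0 < ln 2) by (pose proof ln_lt_2; lra). field. lra.
Qed.

Lemma pow2_ge_2 k : (1 <= k)%nat -> 2 <= 2 ^ k.
Proof.
  intros Hk. replace k with (S (k - 1)) by lia. simpl.
  pose proof (pow_R1_Rle 2 (k - 1)). lra.
Qed.

(** With [X = 2^n] and [Y = 2^(d-1)], the ratio [(X + 1 - 2X/Y) / (X - 1)]
    exceeds [1 - 2/Y] by exactly [(2Y - 2) / (Y (X - 1))]. *)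
Lemma level_ratio_eq d n : (4 <= d)%nat -> (d - 1 <= n)%nat ->
  INR (length (filter (free d) (inner_vertices n))) / INR (length (inner_vertices n))
  = (1 - 2 / 2 ^ (d - 1)) + (2 * 2 ^ (d - 1) - 2) / (2 ^ (d - 1) * (2 ^ n - 1)).
Proof.
  intros Hd Hn.
  pose proof (count_free_inner d n Hd Hn) as C1. pose proof (length_inner_vertices n) as C2.
  apply (f_equal INR) in C1, C2. rewrite plus_INR, pow_INR in C1, C2.
  rewrite plus_INR, pow_INR in C1.
  replace (INR 2) with 2 in * by (simpl; lra). simpl (INR 1) in *.
  assert (HX : 2 <= 2 ^ n) by (apply pow2_ge_2; lia).
  assert (HY : 2 <= 2 ^ (d - 1)) by (apply pow2_ge_2; lia).
  assert (HZ : 2 ^ (n - (d - 2)) * 2 ^ (d - 1) = 2 * 2 ^ n).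
  { rewrite <- pow_add. replace (n - (d - 2) + (d - 1))%nat with (S n) by lia. reflexivity. }
  replace (INR (length (filter (free d) (inner_vertices n))))
    with (2 ^ n + 1 - 2 ^ (n - (d - 2))) by lra.
  replace (INR (length (inner_vertices n))) with (2 ^ n - 1) by lra.
  replace (2 ^ (n - (d - 2))) with (2 * 2 ^ n / 2 ^ (d - 1))
    by (apply (Rmult_eq_reg_r (2 ^ (d - 1))); [field_simplify; lra | lra]).
  field. lra.
Qed.

Lemma Hdim_Kgroup d i : (4 <= d)%nat -> Hdim (Kgroup d i) (1 - 2 / 2 ^ (d - 1)).
Proof.
  intros Hd. set (Y := 2 ^ (d - 1)).
  assert (HY : 2 <= Y) by (apply pow2_ge_2; lia).
  exists (fun n => 2 ^ length (filter (free d) (inner_vertices n)))%nat,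
         (fun n => 2 ^ length (inner_vertices n))%nat.
  split; [intros; now apply card_level_Kgroup|]. split; [intros; apply card_level_aut|].
  apply (is_liminf_from_above _ _ (d - 1)).
  - intros n Hn. rewrite !log2_pow, level_ratio_eq by auto. fold Y.
    assert (HX : 2 <= 2 ^ n) by (apply pow2_ge_2; lia).
    enough (0 < (2 * Y - 2) / (Y * (2 ^ n - 1))) by lra.
    apply Rdiv_lt_0_compat; [lra|]. apply Rmult_lt_0_compat; lra.
  - intros eps Heps. destruct (INR_unbounded (2 / eps + 1)) as [m Hm].
    exists (d - 1 + m)%nat. intros k Hk. rewrite !log2_pow, level_ratio_eq by (auto; lia). fold Y.
    assert (HX : INR m + 1 <= 2 ^ k).
    { pose proof (Nat.pow_gt_lin_r 2 k ltac:(lia)) as H. apply lt_INR in H. rewrite pow_INR in H.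
      replace (INR 2) with 2 in H by (simpl; lra).
      assert (INR (m + 1) <= INR k) by (apply le_INR; lia). rewrite plus_INR in *. simpl in *. lra. }
    assert (HX2 : 2 <= 2 ^ k) by (apply pow2_ge_2; lia).
    assert (Hb : (2 * Y - 2) / (Y * (2 ^ k - 1)) < 2 / (2 ^ k - 1)).
    { apply (Rmult_lt_reg_r (Y * (2 ^ k - 1))). apply Rmult_lt_0_compat; lra.
      field_simplify; lra. }
    assert (Hc : 2 / (2 ^ k - 1) < eps).
    { apply (Rmult_lt_reg_r (2 ^ k - 1)); [lra|]. field_simplify; [|lra].
      assert (2 / eps * eps = 2) by (field; lra).
      assert (eps * (2 ^ k - 1) > eps * (2 / eps)) by (apply Rmult_lt_compat_l; lra). lra. }
    lra.
Qed.

Close Scope R_scope.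

(** * Homomorphisms onto GF(2) *)

Definition left_level_parity (a : word -> bool) (w : word) (k : nat) : bool :=
  parity (words_eq k) (fun u => a (w ++ false :: u)).

Lemma level_parity_S a w k : level_parity a w (S k) =
  xorb (left_level_parity a w k) (parity (words_eq k) (fun u => a (w ++ true :: u))).
Proof.
  unfold level_parity, left_level_parity. simpl words_eq.
  rewrite parity_flat_map, <- parity_xorb. apply parity_ext_in. intros. simpl.
  now rewrite xorb_false_r.
Qed.

(** If [h] swaps at [w], the left child of [h w] receives the right subtree
    of [w]; the discrepancy is a full level parity below [h w]. *)
Lemma left_level_parity_comp g h w k : is_aut g -> is_aut h ->
  left_level_parity (label (fun x => g (h x))) w k =
  xorb (xorb (left_level_parity (label h) w k) (left_level_parity (label g) (h w) k))
       (label h w && level_parity (label g) (h w) (S k)).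
Proof.
  intros Hg Hh. unfold left_level_parity.
  rewrite (parity_ext_in _ _ (fun u => xorb (label h (w ++ false :: u))
            (label g (h w ++ label h w :: section h (w ++ [false]) u)))).
  - rewrite parity_xorb.
    change (fun u => label g (h w ++ label h w :: section h (w ++ [false]) u))
      with (fun u => (fun u' => label g (h w ++ label h w :: u')) (section h (w ++ [false]) u)).
    rewrite (parity_section h (w ++ [false]) k _ Hh), level_parity_S.
    unfold left_level_parity. destruct (label h w).
    + assert (B : forall a b c, xorb a c = xorb (xorb a b) (true && xorb b c))
        by (intros [] [] []; reflexivity).
      apply B.
    + simpl. now rewrite xorb_false_r.
  - intros u _. rewrite label_comp by auto. f_equal.
    replace (w ++ false :: u) with ((w ++ [false]) ++ u) by now rewrite <- app_assoc.
    now rewrite aut_app, aut_snoc, <- app_assoc by auto.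
Qed.

(** The constraint of [Kgroup d i], one level shorter, at the left child of [w]. *)
Definition shifted_defect (d i : nat) (a : word -> bool) (w : word) : bool :=
  xorb (left_level_parity a w (d - 3))
       (parity (seq 1 (d - 3)) (fun j => Nat.testbit i (j - 1) && left_level_parity a w (j - 1))).

Lemma shifted_defect_comp d i g h w : 4 <= d -> is_aut g -> is_aut h ->
  shifted_defect d i (label (fun x => g (h x))) w =
  xorb (xorb (shifted_defect d i (label h) w) (shifted_defect d i (label g) (h w)))
       (label h w && xorb (level_parity (label g) (h w) (d - 2))
                          (weighted_parity d i (label g) (h w))).
Proof.
  intros Hd Hg Hh. unfold shifted_defect. rewrite left_level_parity_comp by auto.
  replace (S (d - 3)) with (d - 2) by lia.
  rewrite (parity_ext_in _ _ (fun j =>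
    xorb (xorb (Nat.testbit i (j - 1) && left_level_parity (label h) w (j - 1))
               (Nat.testbit i (j - 1) && left_level_parity (label g) (h w) (j - 1)))
         (label h w && (Nat.testbit i (j - 1) && level_parity (label g) (h w) j)))).
  - rewrite !parity_xorb, parity_andb_l. unfold weighted_parity.
    generalize (left_level_parity (label h) w (d - 3)), (left_level_parity (label g) (h w) (d - 3)),
      (level_parity (label g) (h w) (d - 2)), (label h w),
      (parity (seq 1 (d - 3)) (fun j => Nat.testbit i (j - 1) && left_level_parity (label h) w (j - 1))),
      (parity (seq 1 (d - 3)) (fun j => Nat.testbit i (j - 1) && left_level_parity (label g) (h w) (j - 1))),
      (parity (seq 1 (d - 3)) (fun j => Nat.testbit i (j - 1) && level_parity (label g) (h w) j)).
    intros [] [] [] [] [] [] []; reflexivity.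
  - intros j Hj. apply in_seq in Hj. rewrite left_level_parity_comp by auto.
    replace (S (j - 1)) with j by lia.
    destruct (Nat.testbit i (j - 1)), (left_level_parity (label h) w (j - 1)),
      (left_level_parity (label g) (h w) (j - 1)), (label h w),
      (level_parity (label g) (h w) j); reflexivity.
Qed.

Definition phi (d i m : nat) (g : tmap) : bool :=
  parity (words_eq m) (fun w => shifted_defect d i (label g) w).

Lemma phi_comp d i m g h : 4 <= d -> 1 <= m -> is_aut h -> Kgroup d i g ->
  phi d i m (fun x => g (h x)) = xorb (phi d i m h) (phi d i m g).
Proof.
  intros Hd Hm Hh [Hg Cg]. unfold phi.
  rewrite (parity_ext_in _ _ (fun w => xorb (shifted_defect d i (label h) w)
                                            (shifted_defect d i (label g) (h w)))).
  - rewrite parity_xorb. f_equal. exact (parity_aut h m (fun w => shifted_defect d i (label g) w) Hh).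
  - intros w Hw. apply in_words_eq in Hw.
    assert (Hhw : h w <> []) by (apply aut_nonnil; auto; intros ->; simpl in Hw; lia).
    rewrite shifted_defect_comp, Cg, xorb_nilpotent, andb_false_r by auto.
    apply xorb_false_r.
Qed.

Lemma shifted_defect_ext d i a b w :
  (forall u, length u <= d - 3 -> a (w ++ false :: u) = b (w ++ false :: u)) ->
  shifted_defect d i a w = shifted_defect d i b w.
Proof.
  intros H. unfold shifted_defect, left_level_parity. f_equal.
  - apply parity_ext_in. intros u Hu; apply in_words_eq in Hu. apply H; lia.
  - apply parity_ext_in. intros j Hj. apply in_seq in Hj. f_equal.
    apply parity_ext_in. intros u Hu; apply in_words_eq in Hu. apply H; lia.
Qed.

Lemma shifted_defect_zero d i a w :
  (forall u, length u <= d - 3 -> a (w ++ false :: u) = false) -> shifted_defect d i a w = false.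
Proof.
  intros H. rewrite (shifted_defect_ext d i a (fun _ => false)) by auto.
  unfold shifted_defect, left_level_parity. rewrite !parity_const_false, parity_false; auto.
  intros. now rewrite parity_const_false, andb_false_r.
Qed.

Lemma phi_label_false d i m g : (forall x, label g x = false) -> phi d i m g = false.
Proof. intros H. apply parity_false. intros. apply shifted_defect_zero. auto. Qed.

Lemma phi_agree d i m n h g : 4 <= d -> agree n h g -> m + d <= n -> phi d i m h = phi d i m g.
Proof.
  intros Hd Ag Hn. apply parity_ext_in. intros w Hw. apply in_words_eq in Hw.
  apply shifted_defect_ext. intros u Hu. apply (label_agree n); auto.
  rewrite !length_app; simpl; lia.
Qed.

Lemma phi_inv d i m s t : 4 <= d -> 1 <= m -> Kgroup d i s -> is_aut t ->
  (forall w, s (t w) = w) -> phi d i m t = phi d i m s.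
Proof.
  intros Hd Hm Ks Ht E. pose proof (phi_comp d i m s t Hd Hm Ht Ks) as C.
  rewrite phi_label_false in C by (intros; now apply label_id).
  destruct (phi d i m t), (phi d i m s); simpl in C; congruence.
Qed.

Definition phi_witness (d i m : nat) : tmap :=
  of_portrait (complete d i (indicator (zeros m ++ true :: zeros (d - 3)))).

Section Witness.
Variables d i m : nat.
Hypothesis Hd : 4 <= d.

Let a := complete d i (indicator (zeros m ++ true :: zeros (d - 3))).

Lemma complete_indicator_short x : length x < m + d - 2 -> a x = false.
Proof.
  intros Hx. apply (complete_unique d i Hd _ (fun _ => false)) with (n := m + d - 2); auto.
  - intros v _. rewrite level_parity_zero, weighted_parity_zero; auto.
  - intros y Hy _. apply indicator_length_neq.
    rewrite length_app. simpl. rewrite !length_zeros. lia.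
Qed.

(** The designated vertex [0^m 0^(d-2)] receives the label of [0^m 1 0^(d-3)]. *)
Lemma complete_indicator_level w u : 1 <= m -> length w = m -> length u = d - 3 ->
  a (w ++ false :: u) = indicator (zeros m) w && indicator (zeros (d - 3)) u.
Proof.
  intros Hm Hw Hu. unfold a.
  assert (Hnil : w <> []) by (intros ->; simpl in Hw; lia).
  assert (Lfu : length (false :: u) = d - 2) by (simpl; lia).
  assert (Ep : forall u', indicator (zeros m ++ true :: zeros (d - 3)) (w ++ u')
                          = indicator (zeros m) w && indicator (true :: zeros (d - 3)) u')
    by (intros; apply indicator_app; now rewrite length_zeros).
  destruct (forallb negb u) eqn:Ez.
  - assert (Uz : u = zeros (d - 3)) by (apply forallb_negb_zeros in Ez; now rewrite Hu in Ez).
    rewrite complete_eq, designated_app by auto. simpl (forallb negb (false :: u)).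
    rewrite Ez, firstn_app_length by auto.
    rewrite (weighted_parity_ext d i _ (fun _ => false) w w).
    + rewrite weighted_parity_zero by auto. simpl xorb.
      rewrite (parity_ext_in _ _
        (fun u' => indicator (zeros m) w && indicator (true :: zeros (d - 3)) u'))
        by (intros; apply Ep).
      rewrite parity_andb_l. unfold indicator at 2.
      rewrite (parity_indicator word_eq_dec) by apply NoDup_filter, words_eq_NoDup.
      destruct (in_dec word_eq_dec (true :: zeros (d - 3)) (filter nonzero_word (words_eq (d - 2))))
        as [Hi|Hi].
      * subst u. unfold indicator. now destruct (word_eq_dec (zeros (d - 3)) (zeros (d - 3))).
      * exfalso. apply Hi, filter_In. split; [|reflexivity].
        apply in_words_eq. simpl. rewrite length_zeros. lia.
    + intros j Hj. apply level_parity_ext. intros u' Hu'. apply complete_indicator_short.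
      rewrite length_app. lia.
  - rewrite complete_free, Ep by (rewrite ?designated_app; auto).
    replace (indicator (true :: zeros (d - 3)) (false :: u)) with false
      by (unfold indicator; destruct word_eq_dec; congruence).
    replace (indicator (zeros (d - 3)) u) with false; [now rewrite !andb_false_r|].
    unfold indicator. destruct (word_eq_dec u (zeros (d - 3))) as [->|]; auto.
    rewrite (proj2 (forallb_negb_zeros _)) in Ez by now rewrite length_zeros. discriminate.
Qed.

End Witness.

Lemma Kgroup_phi_witness d i m : 4 <= d -> Kgroup d i (phi_witness d i m).
Proof. intros Hd. now apply Kgroup_of_complete. Qed.

Lemma phi_witness_lt d i m m' : 4 <= d -> m' < m -> phi d i m' (phi_witness d i m) = false.
Proof.
  intros Hd Hm. apply parity_false. intros w Hw. apply in_words_eq in Hw.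
  apply shifted_defect_zero. intros u Hu. unfold phi_witness. rewrite label_of_portrait.
  apply complete_indicator_short; auto. rewrite length_app; simpl; lia.
Qed.

Lemma phi_witness_eq d i m : 4 <= d -> 1 <= m -> phi d i m (phi_witness d i m) = true.
Proof.
  intros Hd Hm. unfold phi. rewrite (parity_ext_in _ _ (indicator (zeros m))).
  - now rewrite parity_words_eq_indicator, length_zeros, Nat.eqb_refl.
  - intros w Hw. apply in_words_eq in Hw. unfold shifted_defect, phi_witness.
    rewrite (parity_false (seq 1 (d - 3))).
    + rewrite xorb_false_r. unfold left_level_parity.
      rewrite (parity_ext_in _ _ (fun u => indicator (zeros m) w && indicator (zeros (d - 3)) u)).
      * now rewrite parity_andb_l, parity_words_eq_indicator, length_zeros, Nat.eqb_refl, andb_true_r.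
      * intros u Hu. apply in_words_eq in Hu. rewrite label_of_portrait.
        now apply complete_indicator_level.
    + intros j Hj. apply in_seq in Hj. unfold left_level_parity. rewrite parity_false.
      apply andb_false_r. intros u Hu. apply in_words_eq in Hu. rewrite label_of_portrait.
      apply complete_indicator_short; auto. rewrite length_app; simpl; lia.
Qed.

Fixpoint vxor (a b : list bool) : list bool :=
  match a, b with
  | x :: a', y :: b' => xorb x y :: vxor a' b'
  | _, _ => []
  end.

Lemma vxor_map {A} (f g : A -> bool) l :
  vxor (map f l) (map g l) = map (fun x => xorb (f x) (g x)) l.
Proof. induction l; simpl; auto. now rewrite IHl. Qed.

Lemma length_vxor a b : length a = length b -> length (vxor a b) = length a.
Proof. revert b; induction a as [|x a IHa]; intros [|y b]; simpl; intros; auto; try lia. Qed.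

Lemma vxor_comm a b : vxor a b = vxor b a.
Proof. revert b; induction a; intros [|y b]; simpl; auto. now rewrite IHa, xorb_comm. Qed.

Lemma vxor_assoc a b c : vxor (vxor a b) c = vxor a (vxor b c).
Proof. revert b c; induction a; intros [|y b] [|z c]; simpl; auto. now rewrite IHa, xorb_assoc. Qed.

Lemma vxor_K a b : length a = length b -> vxor a (vxor a b) = b.
Proof.
  revert b; induction a; intros [|y b]; simpl; intros; auto; try lia.
  now rewrite IHa, <- xorb_assoc, xorb_nilpotent by lia.
Qed.

Lemma nth_vxor a b q : length a = length b ->
  nth q (vxor a b) false = xorb (nth q a false) (nth q b false).
Proof. revert b q; induction a; intros [|y b] [|q]; simpl; intros; auto; try lia; apply IHa; lia. Qed.

(** All [2^|l|] subset sums of [l], with repetitions. *)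
Fixpoint span (l : list (list bool)) (M : nat) : list (list bool) :=
  match l with
  | [] => [repeat false M]
  | x :: l' => span l' M ++ map (vxor x) (span l' M)
  end.

Lemma length_span l M : length (span l M) = 2 ^ length l.
Proof. induction l; simpl; auto. rewrite length_app, length_map, IHl. lia. Qed.

Lemma length_in_span M l : (forall z, In z l -> length z = M) ->
  forall x, In x (span l M) -> length x = M.
Proof.
  induction l as [|a l IH]; simpl; intros H x Hx.
  - destruct Hx as [<-|[]]. apply repeat_length.
  - apply in_app_iff in Hx. destruct Hx as [Hx|Hx]; auto.
    apply in_map_iff in Hx. destruct Hx as [z [<- Hz]]. rewrite length_vxor; auto.
    rewrite (IH (fun z H' => H z (or_intror H')) z); auto.
Qed.

Lemma span_vxor M l : (forall z, In z l -> length z = M) ->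
  forall x y, In x (span l M) -> In y l -> In (vxor x y) (span l M).
Proof.
  induction l as [|a l IH]; simpl; intros H x y Hx Hy; [contradiction|].
  assert (H' : forall z, In z l -> length z = M) by auto.
  apply in_app_iff in Hx. apply in_app_iff. destruct Hx as [Hx|Hx]; destruct Hy as [<-|Hy].
  - right. rewrite vxor_comm. now apply in_map.
  - left. now apply IH.
  - apply in_map_iff in Hx. destruct Hx as [z [<- Hz]]. left.
    rewrite vxor_comm, vxor_K; auto. rewrite H, (length_in_span M l H' z); auto.
  - apply in_map_iff in Hx. destruct Hx as [z [<- Hz]]. right.
    rewrite vxor_assoc. apply in_map. now apply IH.
Qed.

Lemma span_NoDup_staircase l M k : (forall z, In z l -> length z = M) ->
  (forall idx, idx < length l -> nth (k + idx) (nth idx l []) false = true /\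
       forall q, q < k + idx -> nth q (nth idx l []) false = false) ->
  NoDup (span l M) /\ forall x, In x (span l M) -> forall q, q < k -> nth q x false = false.
Proof.
  revert k; induction l as [|a l IH]; intros k HL Ht; simpl.
  - split. repeat constructor; auto. intros x [<-|[]] q _. apply nth_repeat.
  - assert (H' : forall z, In z l -> length z = M) by (intros; apply HL; simpl; auto).
    pose proof (length_in_span M l H') as EL.
    destruct (IH (S k) H') as [ND Z].
    { intros idx Hidx. destruct (Ht (S idx) ltac:(simpl; lia)) as [T1 T2].
      replace (S k + idx) with (k + S idx) by lia. split; auto. }
    destruct (Ht 0 ltac:(simpl; lia)) as [A1 A2]. simpl in A1, A2. rewrite Nat.add_0_r in A1, A2.
    assert (La : length a = M) by (apply HL; simpl; auto).
    split.
    + apply NoDup_app; auto.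
      * apply Injective_map_NoDup_in; auto. intros x y Hx Hy E.
        rewrite <- (vxor_K a x), E by (rewrite La, (EL x Hx); auto).
        apply vxor_K. rewrite La, (EL y Hy); auto.
      * intros x Hx Hy. apply in_map_iff in Hy. destruct Hy as [z [Ez Hz]].
        pose proof (Z x Hx k ltac:(lia)) as Zx.
        rewrite <- Ez, nth_vxor, A1, (Z z Hz k ltac:(lia)) in Zx by (rewrite La, (EL z Hz); auto).
        discriminate.
    + intros x Hx q Hq. apply in_app_iff in Hx. destruct Hx as [Hx|Hx]. apply Z; auto; lia.
      apply in_map_iff in Hx. destruct Hx as [z [<- Hz]].
      rewrite nth_vxor, A2, Z by (auto; try lia; rewrite La, (EL z Hz); auto). reflexivity.
Qed.

Definition phi_vector (d i M : nat) (g : tmap) : list bool :=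
  map (fun q => phi d i (S q) g) (seq 0 M).

Lemma length_phi_vector d i M g : length (phi_vector d i M g) = M.
Proof. unfold phi_vector. now rewrite length_map, length_seq. Qed.

Lemma phi_vector_comp d i M g h : 4 <= d -> Kgroup d i g -> is_aut h ->
  phi_vector d i M (fun x => g (h x)) = vxor (phi_vector d i M h) (phi_vector d i M g).
Proof.
  intros Hd Kg Hh. unfold phi_vector. rewrite vxor_map. apply map_ext. intros q.
  apply phi_comp; auto; lia.
Qed.

Lemma phi_vector_id d i M : phi_vector d i M (fun w => w) = repeat false M.
Proof.
  unfold phi_vector. rewrite (map_ext _ (fun _ => false)), map_const, length_seq; auto.
  intros q. apply phi_label_false. intros. now apply label_id.
Qed.

Lemma in_span_id l M : In (repeat false M) (span l M).
Proof. induction l; simpl; auto. apply in_app_iff; auto. Qed.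

Lemma phi_vector_gen d i M gs : 4 <= d -> (forall s, In s gs -> Kgroup d i s) ->
  forall h, gen gs h -> Kgroup d i h /\ In (phi_vector d i M h) (span (map (phi_vector d i M) gs) M).
Proof.
  intros Hd Hgs.
  assert (Hl : forall z, In z (map (phi_vector d i M) gs) -> length z = M).
  { intros z Hz. apply in_map_iff in Hz. destruct Hz as [g [<- _]]. apply length_phi_vector. }
  induction 1 as [|s h Hs Hh [Kh IH]|s t h Hs E1 E2 Hh [Kh IH]].
  - split. apply Kgroup_id. rewrite phi_vector_id. apply in_span_id.
  - split. apply Kgroup_comp; auto. rewrite phi_vector_comp by (auto; apply Kh).
    apply span_vxor; auto. now apply in_map.
  - assert (Kt : Kgroup d i t) by (apply (Kgroup_inv d i s t); auto).
    assert (Pt : phi_vector d i M t = phi_vector d i M s).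
    { apply map_ext. intros q. apply phi_inv; auto; [lia|apply Kt]. }
    split. apply Kgroup_comp; auto. rewrite phi_vector_comp, Pt by (auto; apply Kh).
    apply span_vxor; auto. now apply in_map.
Qed.

Lemma span_phi_vector_Kgroup d i M l : 4 <= d ->
  (forall z, In z l -> exists g, Kgroup d i g /\ phi_vector d i M g = z) ->
  forall x, In x (span l M) -> exists g, Kgroup d i g /\ phi_vector d i M g = x.
Proof.
  intros Hd. induction l as [|a l IH]; simpl; intros H x Hx.
  - destruct Hx as [<-|[]]. exists (fun w => w). split. apply Kgroup_id. apply phi_vector_id.
  - apply in_app_iff in Hx. destruct Hx as [Hx|Hx]; [auto|].
    apply in_map_iff in Hx. destruct Hx as [z [<- Hz]].
    destruct (IH (fun z H' => H z (or_intror H')) z Hz) as [gz [Kz <-]].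
    destruct (H a (or_introl eq_refl)) as [ga [Ka <-]].
    exists (fun w => gz (ga w)). split. now apply Kgroup_comp.
    now rewrite phi_vector_comp, vxor_comm by (auto; apply Ka).
Qed.

Lemma nth_map_seq {B} (f : nat -> B) s M q dflt : q < M -> nth q (map f (seq s M)) dflt = f (s + q).
Proof.
  revert s q; induction M; intros s q Hq; [lia|]. destruct q; simpl. f_equal; lia.
  rewrite IHM by lia. f_equal; lia.
Qed.

Lemma span_phi_witness_NoDup d i M : 4 <= d ->
  NoDup (span (map (fun q => phi_vector d i M (phi_witness d i (S q))) (seq 0 M)) M).
Proof.
  intros Hd. apply (span_NoDup_staircase _ M 0).
  - intros z Hz. apply in_map_iff in Hz. destruct Hz as [q [<- _]]. apply length_phi_vector.
  - intros idx Hidx. rewrite length_map, length_seq in Hidx.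
    rewrite nth_map_seq by auto. simpl. unfold phi_vector. split.
    + rewrite nth_map_seq by auto. apply phi_witness_eq; auto. lia.
    + intros q Hq. rewrite nth_map_seq by lia. apply phi_witness_lt; auto. lia.
Qed.

(** Modulo the level [M + d], a subgroup generated by [|gs|] elements has at
    most [2^|gs|] images under [phi_vector], while [Kgroup d i] has [2^M]. *)
Lemma not_top_fin_gen_Kgroup d i : 4 <= d -> ~ top_fin_gen (Kgroup d i).
Proof.
  intros Hd [gs [Hgs Hdense]].
  set (M := length gs + 1).
  set (ws := map (fun q => phi_vector d i M (phi_witness d i (S q))) (seq 0 M)).
  assert (Inc : incl (span ws M) (span (map (phi_vector d i M) gs) M)).
  { intros x Hx. destruct (span_phi_vector_Kgroup d i M ws Hd) with (x := x) as [g [Kg <-]]; auto.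
    - intros z Hz. apply in_map_iff in Hz. destruct Hz as [q [<- _]].
      exists (phi_witness d i (S q)). split; auto. now apply Kgroup_phi_witness.
    - destruct (Hdense (M + d) g Kg) as [h [Gh Ag]].
      destruct (phi_vector_gen d i M gs Hd Hgs h Gh) as [_ Ih].
      replace (phi_vector d i M g) with (phi_vector d i M h); auto.
      apply map_ext_in. intros q Hq. apply in_seq in Hq. apply (phi_agree d i _ (M + d)); auto. lia. }
  pose proof (NoDup_incl_length (span_phi_witness_NoDup d i M Hd) Inc) as C.
  rewrite !length_span in C. unfold ws in C. rewrite !length_map, length_seq in C.
  pose proof (Nat.pow_lt_mono_r 2 (length gs) M ltac:(lia) ltac:(unfold M; lia)). lia.
Qed.

Theorem mainTheorem16 (d : nat) (hd : 4 <= d) :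
  exists F : nat -> tmap -> Prop,
    (forall i j, i < j < 2 ^ (d - 3) -> ~ (forall g, F i g <-> F j g)) /\
    (forall i, i < 2 ^ (d - 3) ->
       defined_by_patterns_of_size (F i) d /\
       Hdim (F i) (1 - 2 / 2 ^ (d - 1))%R /\
       ~ top_fin_gen (F i)).
Proof.
  exists (Kgroup d). split.
  - intros i j Hij. now apply Kgroup_neq.
  - intros i _. split; [split|split].
    + now apply fc_of_size_Kgroup.
    + now apply not_fc_of_smaller_size.
    + now apply Hdim_Kgroup.
    + now apply not_top_fin_gen_Kgroup.
Qed.
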